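(* In the hierarchical partition construction described in the context, let $v,v^*\in V$ be distinct points and let $j$ be a level such that $\mathcal S_{j+1}$ exists. Let $v\in S_1\in\mathcal S_j$, $v\in S_2\in\mathcal S_{j+1}$, $v^*\in S_1^*\in\mathcal S_j$, $v^*\in S_2^*\in\mathcal S_{j+1}$, and suppose that $S_2$ knows $S_2^*$ (at level $j+1$) but $S_1$ does not know $S_1^*$ (at level $j$). Then $$r_j\le d(v,v^* )<\Big(1+\frac{4\tau 2^{-\eta}}{\tau-1}\Big)\tau r_j .$$ In particular, for $\tau=2$ and $\eta=2$, $r_j\le d(v,v^* )\le 6r_j$.
   Context: Let $(V,d)$ be a finite metric space with $|V|\ge 2$ which is doubling with constant $\lambda$: for every $v\in V$ and $r>0$ the open ball $B_{2r}(v)=\{u:d(u,v)<2r\}$ is contained in the union of at most $\lambda$ open balls $B_r(w)$, $w\in V$. Fix an integer $\eta\ge2$ and a real $\tau$ with $1+\frac{1}{2^{\eta-1}-1}\le\tau\le 2^{\eta}$. For $L\subseteq V$ and $r>0$, a greedy partition of $L$ with parameter $r$ is obtained by: set $L_0=L$; while $L_i\ne\emptyset$ choose any $v_i\in L_i$, let $P_i=\{u\in L_i: d(u,v_i)<2^{-\eta-1}r\}$ with leader $v_i$, and set $L_{i+1}=L_i\setminus P_i$. Hierarchical partition construction: choose $r_0$ with $0<r_0<\min_{u\ne v}d(u,v)$ and put $r_j=\tau^j r_0$. Let $\mathcal S_0=\{\{v\}:v\in V\}$, the leader of $\{v\}$ being $v$. While $\mathcal S_j$ has more than one element: let $L_j$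 be the set of leaders of the sets in $\mathcal S_j$, let $\mathcal S'_{j+1}$ be a greedy partition of $L_j$ with parameter $2r_{j+1}$, and let $\mathcal S_{j+1}$ consist, for each $P\in\mathcal S'_{j+1}$, of the set $\bigcup\{S\in\mathcal S_j:\mathrm{leader}(S)\in P\}$, whose leader is defined to be the leader of $P$. Each $\mathcal S_j$ is a partition of $V$. For $S,S'\in\mathcal S_j$, $S$ knows $S'$ (at level $j$) if there are $v\in S$, $u\in S'$ with $d(v,u)<r_j$. *)

From HB Require Import structures.
From mathcomp Require Import all_boot all_order all_algebra.
Set Implicit Arguments. Unset Strict Implicit. Unset Printing Implicit Defensive.
Import Order.TTheory GRing.Theory Num.Theory.
Local Open Scope ring_scope.

Section Defs.
Variables (R : realFieldType) (V : finType) (d : V -> V -> R).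

Definition metric : Prop :=
  [/\ forall x y, 0 <= d x y,
      forall x y, d x y = 0 <-> x = y,
      forall x y, d x y = d y x
    & forall x y z, d x z <= d x y + d y z].

Definition ball (v : V) (r : R) : {set V} := [set u | d u v < r].

Definition doubling (lam : nat) : Prop :=
  forall (v : V) (r : R), 0 < r ->
    exists W : {set V}, (#|W| <= lam)%N /\
      ball v (2 * r) \subset \bigcup_(w in W) ball w r.

(* Greedy partition of L with parameter r, run along the sequence of chosen
   leaders ls. *)
Fixpoint greedy (eta : nat) (r : R) (L : {set V}) (ls : seq V)
  : option (seq ({set V} * V)) :=
  match ls with
  | [::] => if L == set0 then Some [::] else None
  | v :: ls' =>
      if v \in L then
        let P := [set u in L | d u v < (2 ^+ eta.+1)^-1 * r] in
        omap (cons (P, v)) (greedy eta r (L :\: P) ls')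
      else None
  end.

Definition greedy_partition (eta : nat) (r : R) (L : {set V})
  (Q : seq ({set V} * V)) : Prop :=
  exists ls : seq V, greedy eta r L ls = Some Q.

Definition leaders (Sj : seq ({set V} * V)) : {set V} :=
  [set x | x \in map snd Sj].

Definition hier_step (eta : nat) (r : R) (Sj Sj1 : seq ({set V} * V)) : Prop :=
  exists Q, greedy_partition eta r (leaders Sj) Q /\
    Sj1 = [seq (\bigcup_(p <- Sj | p.2 \in q.1) p.1, q.2) | q : {set V} * V <- Q].

Definition radius (tau r0 : R) (j : nat) : R := tau ^+ j * r0.

(* S : levels S_0, ..., S_n of a (partial) run of the hierarchical
   construction, each level a list of (set, leader) pairs. *)
Definition hierarchy (eta : nat) (tau r0 : R)
  (S : nat -> seq ({set V} * V)) (n : nat) : Prop :=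
  S 0%N = [seq ([set v], v) | v <- enum V] /\
  forall j, (j < n)%N ->
    (1 < size (S j))%N /\ hier_step eta (2 * radius tau r0 j.+1) (S j) (S j.+1).

Definition knows (r : R) (S S' : {set V}) : Prop :=
  exists v u, v \in S /\ u \in S' /\ d v u < r.

End Defs.

From HB Require Import structures.
From mathcomp Require Import all_boot all_order all_algebra.
From mathcomp Require Import ring lra.
Set Implicit Arguments.
Unset Strict Implicit.
Unset Printing Implicit Defensive.

Import Order.TTheory GRing.Theory Num.Theory.
Local Open Scope ring_scope.

(* Every part built at level k lies within
   rho_k = 2^-eta r_0 (tau + ... + tau^k) < 2^-eta r_0 tau^(k+1) / (tau - 1)
   of its leader, since the leader of a level-(k+1) part collects leaders of
   level-k parts at distance less than 2^(-eta-1) * 2 r_(k+1).  If v and v' are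
   in level-(j+1) parts containing points a, b with d(a, b) < r_(j+1), the
   triangle inequality through a, the two leaders and b gives
   d(v, v') < 4 rho_(j+1) + r_(j+1).  If moreover their level-j parts do not
   know each other, d(v, v') >= r_j. *)

Section HierarchyGeometry.
Variables (R : realFieldType) (V : finType) (d : V -> V -> R).

Lemma greedy_part_near_leader eta r (ls : seq V) L Q q x :
  greedy d eta r L ls = Some Q -> q \in Q -> x \in q.1 ->
  d x q.2 < (2 ^+ eta.+1)^-1 * r.
Proof.
elim: ls L Q => [|a ls IH] L Q /=; first by case: ifP => // _ [<-].
case: ifP => // aL; case E: greedy => [Q'|] //= [<-].
rewrite inE => /orP [/eqP -> | /(IH _ _ E) //].
by rewrite inE => /andP [].
Qed.

Lemma mem_bigcup_seq_cond (I : finType) (s : seq I) (P : pred I)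
  (F : I -> {set V}) u :
  u \in \bigcup_(p <- s | P p) F p -> exists2 p, p \in s & P p && (u \in F p).
Proof.
rewrite -big_filter bigcup_seq => /bigcupP [p].
by rewrite mem_filter => /andP [Pp ps] uF; exists p; rewrite ?Pp.
Qed.

Fixpoint level_spread (eta : nat) (tau r0 : R) (k : nat) : R :=
  if k is k'.+1 then
    level_spread eta tau r0 k' + (2 ^+ eta.+1)^-1 * (2 * radius tau r0 k)
  else 0.

Hypothesis metric_d : metric d.

Lemma hierarchy_part_near_leader eta tau r0 S n k P l u :
  hierarchy d eta tau r0 S n -> (k <= n)%N -> (P, l) \in S k -> u \in P ->
  d u l <= level_spread eta tau r0 k.
Proof.
case: metric_d => _ d_eq0 _ d_tri [S0 HS].
elim: k P l u => [|k IH] P l u kn.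
  rewrite S0 => /mapP [w _ [-> ->]]; rewrite inE => /eqP ->.
  by rewrite (proj2 (d_eq0 w w) erefl).
have [_ [Q [[ls Hg] ->]]] := HS k kn.
case/mapP => q qQ [-> ->] /mem_bigcup_seq_cond [[P' l'] pS /andP [/= l'q uP']].
apply: le_trans (d_tri _ l' _) _; apply: lerD; first exact: IH (ltnW kn) pS uP'.
exact: ltW (greedy_part_near_leader Hg qQ l'q).
Qed.

Lemma dist_lt_of_knows r rho (x y : V) (Px Py : {set V}) lx ly :
  (forall u, u \in Px -> d u lx <= rho) -> (forall u, u \in Py -> d u ly <= rho) ->
  x \in Px -> y \in Py -> knows d r Px Py -> d x y < rho + rho + r + (rho + rho).
Proof.
case: metric_d => _ _ d_sym d_tri Hx Hy xP yP [a [b [aP [bP dab]]]].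
have d_leader u w P l : (forall z, z \in P -> d z l <= rho) ->
    u \in P -> w \in P -> d u w <= rho + rho.
  move=> HP uP wP; apply: le_trans (d_tri _ l _) _.
  by rewrite lerD ?HP // d_sym HP.
apply: le_lt_trans (d_tri _ a _) _; rewrite -addrA.
apply: ler_ltD; first exact: d_leader Hx xP aP.
apply: le_lt_trans (d_tri _ b _) _.
by apply: ltr_leD => //; exact: d_leader Hy bP yP.
Qed.

Lemma dist_ge_of_not_knows r (x y : V) (Px Py : {set V}) :
  x \in Px -> y \in Py -> ~ knows d r Px Py -> r <= d x y.
Proof. by move=> xP yP nk; rewrite leNgt; apply/negP => dxy; apply: nk; exists x, y. Qed.

End HierarchyGeometry.

Lemma level_spread_telescope (R : realFieldType) eta (tau r0 : R) k :
  level_spread eta tau r0 k * (tau - 1) =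
  (2 ^+ eta)^-1 * r0 * (tau ^+ k.+1 - tau).
Proof.
elim: k => [|k IH] /=; first by rewrite expr1 subrr mulr0 mul0r.
rewrite mulrDl IH /radius [2 ^+ eta.+1]exprS [tau ^+ k.+2]exprS.
field; by rewrite ?expf_eq0 pnatr_eq0 ?andbF.
Qed.

Lemma level_spread_le (R : realFieldType) eta (tau r0 : R) k :
  1 < tau -> 0 <= r0 ->
  level_spread eta tau r0 k <= (2 ^+ eta)^-1 * r0 * tau ^+ k.+1 / (tau - 1).
Proof.
move=> tau1 r0_ge0; rewrite ler_pdivlMr ?subr_gt0 // level_spread_telescope.
rewrite ler_wpM2l ?gerBl ?mulr_ge0 ?invr_ge0 ?exprn_ge0 //.
exact: le_trans (ltW tau1).
Qed.

Theorem lemma6 (R : realFieldType) (V : finType) (d : V -> V -> R)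
  (lam eta : nat) (tau r0 : R) (S : nat -> seq ({set V} * V)) (n j : nat)
  (v vs : V) (S1 S2 S1s S2s : {set V}) :
  metric d -> (2 <= #|V|)%N -> doubling d lam ->
  (2 <= eta)%N ->
  1 + (2 ^+ eta.-1 - 1)^-1 <= tau -> tau <= 2 ^+ eta ->
  0 < r0 -> (forall x y : V, x != y -> r0 < d x y) ->
  hierarchy d eta tau r0 S n -> (j < n)%N ->
  v != vs ->
  S1 \in map fst (S j) -> v \in S1 ->
  S2 \in map fst (S j.+1) -> v \in S2 ->
  S1s \in map fst (S j) -> vs \in S1s ->
  S2s \in map fst (S j.+1) -> vs \in S2s ->
  knows d (radius tau r0 j.+1) S2 S2s ->
  ~ knows d (radius tau r0 j) S1 S1s ->
  (radius tau r0 j <= d v vs /\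
   d v vs < (1 + 4 * tau * (2 ^+ eta)^-1 / (tau - 1)) * tau * radius tau r0 j) /\
  (tau = 2 -> eta = 2%N -> d v vs <= 6 * radius tau r0 j).
Proof.
move=> Hm _ _ eta2 tau_lb _ r0_gt0 _ Hh jn _ _ vS1 /mapP [[P l] Pin ->]
  vP _ vsS1s /mapP [[Ps ls] Psin ->] vsPs know_next not_know.
have tau1 : 1 < tau.
  apply: lt_le_trans tau_lb; rewrite ltrDl invr_gt0 subr_gt0.
  by rewrite exprn_egt1 ?ltr1n //; case: (eta) eta2 => [|[|]].
have near Q lQ : (Q, lQ) \in S j.+1 ->
    forall u, u \in Q -> d u lQ <= level_spread eta tau r0 j.+1.
  by move=> QS u uQ; exact: hierarchy_part_near_leader Hh jn QS uQ.
have ub := dist_lt_of_knows Hm (near _ _ Pin) (near _ _ Psin) vP vsPs know_next.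
have spread_le := level_spread_le eta j.+1 tau1 (ltW r0_gt0).
set rho := level_spread _ _ _ _ in ub spread_le.
set B := _ / (tau - 1) in spread_le.
have target : (1 + 4 * tau * (2 ^+ eta)^-1 / (tau - 1)) * tau * radius tau r0 j
    = radius tau r0 j.+1 + 4 * B.
  by rewrite /B /radius !exprS; ring.
have ub_target :
    d v vs < (1 + 4 * tau * (2 ^+ eta)^-1 / (tau - 1)) * tau * radius tau r0 j.
  by rewrite target; lra.
split; first by split=> //; exact: dist_ge_of_not_knows vS1 vsS1s not_know.
move=> tau2 eta_2; move: ub_target; rewrite tau2 eta_2 => /ltW.
by have -> : (1 + 4 * 2 * (2 ^+ 2)^-1 / (2 - 1)) * 2 = 6 :> R by field.
Qed.
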